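(* If Dynamic A* (with \texttt{reeval} true or false) uses a dyn-admissible, dyn-monotonic and dyn-consistent dynamic heuristic, then the sequence of values $\hat g+\hat h$ of the entries $\langle s,\hat g,\hat h\rangle$ popped from Open, in the order they are popped, is non-decreasing.
   Context: A transition system is $\mathcal T=\langle S,L,c,T,s_I,S_G\rangle$ with finite states $S$, finite labels $L$, cost function $c:L\to\mathbb R_{\ge0}$, transitions $T\subseteq S\times L\times S$, initial state $s_I$, goal states $S_G\subseteq S$; $h^*(s)$ is the minimal cost of a path from $s$ to a goal ($\infty$ if none). An information source $\sigma$ consists of a set $\mathcal I_\sigma$, $\iota_0^\sigma\in\mathcal I_\sigma$, $\mathrm{update}_\sigma:\mathcal I_\sigma\times T\to\mathcal I_\sigma$, $\mathrm{refine}_\sigma:\mathcal I_\sigma\times S\to\mathcal I_\sigma$. Reachable information: $\iota_n$ is reachable if obtained from $\iota_0^\sigma$ by a sequence of refine steps on states and update steps on transitions $e_1,\dots,e_n$, where each refined state and each origin of an updated transition is $s_I$ or the target of an earlier updated transition. A dynamic heuristic over $\sigma$ is $h:S\times\mathcal I_\sigma\to\mathbb R_{\ge0}\cup\{\infty\}$. It is dyn-admissible if $h(s,\iota)\le h^*(s)$; dyn-consistent if $h(s,\iota)\le c(\ell)+h(s',\iota)$ for all $\langle s,\ell,s'\rangle\in T$; each for all states and all reachable $\iota$; and dyn-monotonic if $h(s,\iota)\le h(s,\mathrm{update}_\sigma(\iota,t))$ and $h(s,\iota)\le h(s,\mathrm{refine}_\sigma(\iota,s'))$ for all reachable $\iota$,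 all $s,s'\in S$, all $t\in T$. Parent source $\sigma_p$: $\mathcal I_{\sigma_p}$ = partial functions $S\rightharpoonup\mathbb R_{\ge0}\times(T\cup\{\bot\})$; $\iota_0=\{s_I\mapsto\langle0,\bot\rangle\}$; refine is the identity; $\mathrm{update}(\iota,\langle s,\ell,s'\rangle)$ with $\iota(s)=\langle g,\cdot\rangle$ changes only $s'$, setting it to $\langle g+c(\ell),\langle s,\ell,s'\rangle\rangle$ if $\iota(s')$ is undefined or has $g$-component $\ge g+c(\ell)$, otherwise unchanged. Dynamic A* takes $\mathcal T$, sources $\sigma_p,\sigma_h$, a dynamic heuristic $h$ over $\sigma_h$ and a Boolean flag \texttt{reeval}. Notation: at any moment $g(s)$ is the $g$-component of the current $\mathcal I(\sigma_p)(s)$ and $h(s)$ denotes $h(s,\mathcal I(\sigma_h))$ for the current $\mathcal I(\sigma_h)$. Open is a priority queue of entries $\langle s,g,h\rangle$ (duplicates allowed), popped by minimal stored value $g+h$ (ties arbitrary). Algorithm: 1. $\mathcal I(\sigma):=\iota_0^\sigma$ for both sources; $S_{\mathrm{known}}:=\{s_I\}$; Closed $:=\emptyset$; Open empty. If $h(s_I)<\infty$ insert $\langle s_I,g(s_I),h(s_I)\rangle$. 2. While Open is nonempty: pop an entry $\langle s,\hat g,\hat h\rangle$ of minimal $\hat g+\hat h$. If $s\in$ Closed, continue with the next iteration. Otherwise set $\mathcal I(\sigma):=\mathrm{refine}_\sigma(\mathcal I(\sigma),s)$ for both sources. If \texttt{reeval} is true and $\hat h<h(s)$: if $h(s)<\infty$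 insert $\langle s,g(s),h(s)\rangle$; continue with the next iteration (this is a re-evaluation). Otherwise add $s$ to Closed ($s$ is expanded). If $s\in S_G$, return the path obtained by following the parent pointers of $\mathcal I(\sigma_p)$ from $s$ back to $s_I$. Otherwise, for each $t=\langle s,\ell,s'\rangle\in T$ in some order: let $old:=g(s')$ if $s'\in S_{\mathrm{known}}$ and undefined otherwise; set $\mathcal I(\sigma):=\mathrm{update}_\sigma(\mathcal I(\sigma),t)$ for both sources; add $s'$ to $S_{\mathrm{known}}$; if $h(s')=\infty$ skip $s'$; else if $old$ is undefined insert $\langle s',g(s'),h(s')\rangle$; else if $old>g(s')$, remove $s'$ from Closed if it is there (reopening) and insert $\langle s',g(s'),h(s')\rangle$. 3. Return ''unsolvable''. *)

From HB Require Import structures.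
From mathcomp Require Import all_boot all_order all_algebra.
From mathcomp Require Import constructive_ereal.
Set Implicit Arguments.
Unset Strict Implicit.
Unset Printing Implicit Defensive.
Import Order.TTheory GRing.Theory Num.Theory.
Local Open Scope ring_scope.
Local Open Scope ereal_scope.

Section DynAStar.
Variables (R : realDomainType) (S L : finType).

Definition trans := (S * L * S)%type.
Definition src (t : trans) : S := t.1.1.
Definition lbl (t : trans) : L := t.1.2.
Definition tgt (t : trans) : S := t.2.

Fixpoint goal_path (T : {set trans}) (SG : {set S}) (s : S) (p : seq trans) : bool :=
  match p with
  | [::] => s \in SG
  | t :: p' => [&& t \in T, src t == s & goal_path T SG (tgt t) p']
  end.

Definition path_cost (c : L -> R) (p : seq trans) : R :=
  (\sum_(t <- p) c (lbl t))%R.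

(* [le_hstar T c SG s v] : v <= h^*(s), where h^*(s) is the minimal cost of a
   path from s to a goal (+oo if none), i.e. v is below the cost of every such path. *)
Definition le_hstar (T : {set trans}) (c : L -> R) (SG : {set S}) (s : S)
    (v : \bar R) : Prop :=
  forall p, goal_path T SG s p -> v <= (path_cost c p)%:E.

Record info_source := InfoSource {
  info : Type;
  iota0 : info;
  update : info -> trans -> info;
  refine : info -> S -> info }.

(* [reach_info T sI sig i K]: information i is obtained from iota0 by refine steps
   and update steps (on transitions of T), where every refined state and every
   origin of an updated transition is sI or the target of an earlier updated
   transition; K is the set of such admissible states so far. *)
Inductive reach_info (T : {set trans}) (sI : S) (sig : info_source) :
    info sig -> {set S} -> Prop :=
  | RI0 : reach_info T sI (iota0 sig) [set sI]
  | RIref i K s : reach_info T sI i K -> s \in K ->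
      reach_info T sI (refine i s) K
  | RIupd i K t : reach_info T sI i K -> t \in T -> src t \in K ->
      reach_info T sI (update i t) (tgt t |: K).

Definition reachable_info (T : {set trans}) (sI : S) (sig : info_source) (i : info sig) : Prop :=
  exists K, reach_info T sI i K.

Definition dyn_heuristic (sig : info_source) (h : S -> info sig -> \bar R) : Prop :=
  forall s i, 0 <= h s i /\ h s i != -oo.

Definition dyn_admissible (T : {set trans}) (c : L -> R) (sI : S) (SG : {set S}) (sig : info_source)
    (h : S -> info sig -> \bar R) : Prop :=
  forall s i, reachable_info T sI (sig := sig) i -> le_hstar T c SG s (h s i).

Definition dyn_consistent (T : {set trans}) (c : L -> R) (sI : S) (sig : info_source)
    (h : S -> info sig -> \bar R) : Prop :=
  forall t i, t \in T -> reachable_info T sI (sig := sig) i ->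
    h (src t) i <= (c (lbl t))%:E + h (tgt t) i.

Definition dyn_monotonic (T : {set trans}) (sI : S) (sig : info_source) (h : S -> info sig -> \bar R) : Prop :=
  forall i, reachable_info T sI (sig := sig) i ->
    (forall s t, t \in T -> h s i <= h s (update i t)) /\
    (forall s s', h s i <= h s (refine i s')).

(* partial functions S -> R_{>=0} x (T u {bot}); None = undefined, bot = None *)
Definition pinfo := S -> option (R * option trans).

Definition p_init (sI : S) : pinfo :=
  fun x => if x == sI then Some (0%R, None) else None.

(* update(iota, <s,l,s'>); when iota(s) is undefined (never the case in the
   algorithm) we leave iota unchanged. *)
Definition p_update (c : L -> R) (i : pinfo) (t : trans) : pinfo :=
  match i (src t) with
  | None => i
  | Some (g, _) =>
      let newv := fun x => if x == tgt t then Some ((g + c (lbl t))%R, Some t) else i x in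
      match i (tgt t) with
      | None => newv
      | Some (g', _) => if (g + c (lbl t) <= g')%R then newv else i
      end
  end.

Definition p_refine (i : pinfo) (s : S) : pinfo := i.

Definition parent_source (c : L -> R) (sI : S) : info_source :=
  @InfoSource pinfo (p_init sI) (p_update c) p_refine.

(* g-component of iota(s) (0 if undefined; only used on defined states) *)
Definition gval (i : pinfo) (s : S) : R :=
  match i s with Some (g, _) => g | None => 0%R end.

Definition entry := (S * R * \bar R)%type.
Definition ekey (e : entry) : \bar R := (e.1.2)%:E + e.2.

Record config (sig : info_source) := Config {
  cIp : pinfo;
  cIh : info sig;
  cknown : {set S};
  cclosed : {set S};
  copen : seq entry;
  cdone : bool }.

Variables (T : {set trans}) (c : L -> R) (sI : S) (SG : {set S}).
Variables (sig : info_source) (h : S -> info sig -> \bar R).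

Definition init_config : config sig :=
  let Ip := p_init sI in
  let Ih := iota0 sig in
  Config Ip Ih [set sI] set0
    (if h sI Ih < +oo then [:: (sI, gval Ip sI, h sI Ih)] else [::]) false.

Definition expand_one (cf : config sig) (t : trans) : config sig :=
  let s' := tgt t in
  let known_old := s' \in cknown cf in
  let old := gval (cIp cf) s' in
  let Ip := p_update c (cIp cf) t in
  let Ih := update (cIh cf) t in
  let known := s' |: cknown cf in
  let hs := h s' Ih in
  let new := (s', gval Ip s', hs) in
  if hs == +oo then Config Ip Ih known (cclosed cf) (copen cf) (cdone cf)
  else if ~~ known_old then Config Ip Ih known (cclosed cf) (new :: copen cf) (cdone cf)
  else if (gval Ip s' < old)%R then
    Config Ip Ih known (cclosed cf :\ s') (new :: copen cf) (cdone cf)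
  else Config Ip Ih known (cclosed cf) (copen cf) (cdone cf).

(* Open is a
   multiset (seq); the popped entry is any one of minimal stored value; the
   successors are processed in any order ts. *)
Inductive astar_step (reeval : bool) : config sig -> \bar R -> config sig -> Prop :=
  | StepClosed cf e :
      ~~ cdone cf -> e \in copen cf -> all (fun e' => ekey e <= ekey e') (copen cf) ->
      e.1.1 \in cclosed cf ->
      astar_step reeval cf (ekey e)
        (Config (cIp cf) (cIh cf) (cknown cf) (cclosed cf) (rem e (copen cf)) false)
  | StepReeval cf e :
      ~~ cdone cf -> e \in copen cf -> all (fun e' => ekey e <= ekey e') (copen cf) ->
      e.1.1 \notin cclosed cf ->
      let s := e.1.1 in
      let Ip := p_refine (cIp cf) s in
      let Ih := refine (cIh cf) s in
      reeval -> e.2 < h s Ih ->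
      astar_step reeval cf (ekey e)
        (Config Ip Ih (cknown cf) (cclosed cf)
           (if h s Ih < +oo then (s, gval Ip s, h s Ih) :: rem e (copen cf)
            else rem e (copen cf)) false)
  | StepGoal cf e :
      ~~ cdone cf -> e \in copen cf -> all (fun e' => ekey e <= ekey e') (copen cf) ->
      e.1.1 \notin cclosed cf ->
      let s := e.1.1 in
      let Ip := p_refine (cIp cf) s in
      let Ih := refine (cIh cf) s in
      ~~ (reeval && (e.2 < h s Ih)) -> s \in SG ->
      astar_step reeval cf (ekey e)
        (Config Ip Ih (cknown cf) (s |: cclosed cf) (rem e (copen cf)) true)
  | StepExpand cf e ts :
      ~~ cdone cf -> e \in copen cf -> all (fun e' => ekey e <= ekey e') (copen cf) ->
      e.1.1 \notin cclosed cf ->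
      let s := e.1.1 in
      let Ip := p_refine (cIp cf) s in
      let Ih := refine (cIh cf) s in
      ~~ (reeval && (e.2 < h s Ih)) -> s \notin SG ->
      uniq ts -> (forall t, (t \in ts) = (t \in T) && (src t == s)) ->
      astar_step reeval cf (ekey e)
        (foldl expand_one
           (Config Ip Ih (cknown cf) (s |: cclosed cf) (rem e (copen cf)) false) ts).

(* [astar_run reeval vs cf]: after the iterations so far, the popped values
   (in popping order) are vs and the current configuration is cf. *)
Inductive astar_run (reeval : bool) : seq (\bar R) -> config sig -> Prop :=
  | Run0 : astar_run reeval [::] init_config
  | RunS vs cf v cf' : astar_run reeval vs cf -> astar_step reeval cf v cf' ->
      astar_run reeval (rcons vs v) cf'.

End DynAStar.

From HB Require Import structures.
From mathcomp Require Import all_boot all_order all_algebra.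
From mathcomp Require Import constructive_ereal.
Import Order.TTheory GRing.Theory Num.Theory.
Set Implicit Arguments.
Unset Strict Implicit.
Local Open Scope ring_scope.

(* The values popped from Open are non-decreasing because, between pops, Open
   keeps two properties: every entry has stored value at least the last popped
   value v, and every known, unclosed state x with finite h(x) has an entry in
   Open carrying its current g(x) and a stored heuristic value at most the
   current h(x) (monotonicity: heuristic values only grow).  The second property
   makes the popped minimum a lower bound of g(x) + h(x) over such states, and
   consistency then bounds the entries pushed while expanding s from below by
   g(s) + h(s), hence by v. *)

Section ParentUpdate.
Variables (R : realDomainType) (S L : finType).
Context {c : L -> R}.
Variables (Ip : pinfo R S L) (t : trans S L) (g : R) (p : option (trans S L)).
Hypothesis Ip_src : Ip (src t) = Some (g, p).

Lemma p_update_other x : x != tgt t -> p_update c Ip t x = Ip x.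
Proof.
move=> /negbTE Hx; rewrite /p_update Ip_src.
case: (Ip (tgt t)) => [[g' p']|]; last by rewrite Hx.
by case: ifP; rewrite ?Hx.
Qed.

Lemma p_update_tgt_defined : p_update c Ip t (tgt t) != None.
Proof.
rewrite /p_update Ip_src.
case E: (Ip (tgt t)) => [[g' p']|]; last by rewrite eqxx.
by case: ifP; rewrite ?eqxx ?E.
Qed.

Lemma p_update_tgt :
  gval (p_update c Ip t) (tgt t) = g + c (lbl t) \/
  p_update c Ip t (tgt t) = Ip (tgt t).
Proof.
rewrite /p_update /gval Ip_src.
case E: (Ip (tgt t)) => [[g' p']|]; last by rewrite eqxx; left.
by case: ifP; rewrite ?eqxx ?E; [left|right].
Qed.

Lemma gval_p_update_undef :
  Ip (tgt t) = None -> gval (p_update c Ip t) (tgt t) = g + c (lbl t).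
Proof. by move=> E; rewrite /p_update /gval Ip_src E eqxx. Qed.

Lemma gval_p_update_tgt_le :
  Ip (tgt t) != None -> gval (p_update c Ip t) (tgt t) <= gval Ip (tgt t).
Proof.
rewrite /p_update /gval Ip_src.
case E: (Ip (tgt t)) => [[g' p']|] // _.
by case: ifP => [Hle|_]; rewrite ?eqxx ?E.
Qed.

Lemma gval_p_update_src :
  0 <= c (lbl t) -> gval Ip (src t) <= gval (p_update c Ip t) (src t).
Proof.
move=> c_ge0; have [Est|Hne] := eqVneq (src t) (tgt t); last first.
  by rewrite /gval (p_update_other Hne).
rewrite Est; case: p_update_tgt => [->|E]; last by rewrite /gval E.
by rewrite /gval -Est Ip_src lerDl.
Qed.

End ParentUpdate.

Section DynamicAStar.
Variables (R : realDomainType) (S L : finType).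
Variables (T : {set trans S L}) (c : L -> R) (sI : S) (SG : {set S}).
Variables (sig : info_source S L) (h : S -> info sig -> \bar R).
Hypothesis c_ge0 : forall l, 0 <= c l.
Hypothesis h_mono : dyn_monotonic T sI h.
Hypothesis h_cons : dyn_consistent T c sI h.

Local Open Scope ereal_scope.

Lemma h_le_update Ih K t x :
  reach_info T sI Ih K -> t \in T -> h x Ih <= h x (update Ih t).
Proof. by move=> HR Ht; case: (h_mono (ex_intro _ K HR)) => H _; apply: H. Qed.

Lemma h_le_refine Ih K s x : reach_info T sI Ih K -> h x Ih <= h x (refine Ih s).
Proof. by move=> HR; case: (h_mono (ex_intro _ K HR)) => _ H; apply: H. Qed.

Definition covers (O : seq (entry R S)) (Ip : pinfo R S L) (Ih : info sig) (x : S) :=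
  exists2 w, w \in O & [/\ w.1.1 = x, w.1.2 = gval Ip x & w.2 <= h x Ih].

Lemma covers_head O Ip Ih x : covers ((x, gval Ip x, h x Ih) :: O) Ip Ih x.
Proof. by exists (x, gval Ip x, h x Ih); rewrite ?mem_head. Qed.

Lemma covers_cons O Ip Ih e x : covers O Ip Ih x -> covers (e :: O) Ip Ih x.
Proof. by case=> w Hw Hp; exists w; rewrite // in_cons Hw orbT. Qed.

Lemma covers_rem O Ip Ih e x :
  x != e.1.1 -> covers O Ip Ih x -> covers (rem e O) Ip Ih x.
Proof.
move=> Hne [w Hw [Hx Hg Hh]]; exists w => //.
by apply: rem_mem Hw; apply: contraNneq Hne => Ewe; rewrite -Hx Ewe.
Qed.

Lemma covers_le O Ip Ip' Ih Ih' x :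
  gval Ip' x = gval Ip x -> h x Ih <= h x Ih' ->
  covers O Ip Ih x -> covers O Ip' Ih' x.
Proof.
move=> Eg Hle [w Hw [Hx Hg Hh]]; exists w => //.
by split=> //; [rewrite Eg | apply: le_trans Hle].
Qed.

Definition astar_inv (b : \bar R) (cf : config R sig) : Prop :=
  [/\ reach_info T sI (cIh cf) (cknown cf),
      forall x, (x \in cknown cf) = (cIp cf x != None),
      forall e, e \in copen cf -> e.1.1 \in cknown cf,
      forall e, e \in copen cf -> b <= ekey e &
      forall x, x \in cknown cf -> x \notin cclosed cf -> h x (cIh cf) < +oo ->
        covers (copen cf) (cIp cf) (cIh cf) x].

Lemma init_inv : astar_inv -oo (init_config sI h).
Proof.
split=> //=.
- exact: RI0.
- by move=> x; rewrite in_set1 /p_init; case: (x == sI).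
- by case: ifP => _ e //; rewrite in_cons orbF => /eqP-> /=; rewrite in_set1.
- by move=> e _; rewrite leNye.
move=> x; rewrite in_set1 => /eqP-> _ Hfin; rewrite Hfin; exact: covers_head.
Qed.

Lemma popped_key_le b cf e x :
  astar_inv b cf -> e \in copen cf -> all (fun e' => ekey e <= ekey e') (copen cf) ->
  x \in cknown cf -> x \notin cclosed cf ->
  ekey e <= (gval (cIp cf) x)%:E + h x (cIh cf).
Proof.
case=> _ _ _ _ Hcov He Hmin HxK HxC.
have [Hfin|] := boolP (h x (cIh cf) < +oo); last first.
  by rewrite ltey negbK => /eqP ->; rewrite addey // leey.
have [w Hw [_ Hg Hh]] := Hcov x HxK HxC Hfin.
by apply: le_trans (allP Hmin w Hw) _; rewrite /ekey Hg; apply: leeD2l.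
Qed.

Lemma inv_push v Ip Ih K C O d e :
  astar_inv v (Config Ip Ih K C O d) -> e.1.1 \in K -> v <= ekey e ->
  astar_inv v (Config Ip Ih K C (e :: O) d).
Proof.
case=> HR Hdom Hknown Hge Hcov HeK Hv; split=> //=.
- by move=> e'; rewrite in_cons => /predU1P[->|/Hknown].
- by move=> e'; rewrite in_cons => /predU1P[->|/Hge].
- by move=> x HxK HxC Hfin; apply/covers_cons/Hcov.
Qed.

Lemma inv_unclose v Ip Ih K C O d s :
  astar_inv v (Config Ip Ih K (s |: C) O d) ->
  (s \notin C -> h s Ih < +oo -> covers O Ip Ih s) ->
  astar_inv v (Config Ip Ih K C O d).
Proof.
case=> HR Hdom Hknown Hge Hcov Hs; split=> //= x HxK HxC Hfin.
have [Exs|Hne] := eqVneq x s; first by rewrite Exs in HxC Hfin *; apply: Hs.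
by apply: Hcov; rewrite //= in_setU1 negb_or Hne.
Qed.

Lemma pop_inv b cf e Ih (C : {set S}) :
  astar_inv b cf -> e \in copen cf -> all (fun e' => ekey e <= ekey e') (copen cf) ->
  reach_info T sI Ih (cknown cf) -> (forall x, h x (cIh cf) <= h x Ih) ->
  e.1.1 \in C -> cclosed cf \subset C ->
  astar_inv (ekey e) (Config (cIp cf) Ih (cknown cf) C (rem e (copen cf)) false).
Proof.
case=> _ Hdom Hknown _ Hcov He Hmin HR Hmono HsC Hsub; split=> //=.
- by move=> e' /mem_rem /Hknown.
- by move=> e' /mem_rem; apply: (allP Hmin).
move=> x HxK HxC Hfin; apply: covers_rem.
  by apply: contraNneq HxC => ->.
apply: covers_le (Hmono x) (Hcov x HxK _ _) => //.
  by apply: contraNN HxC; apply: (subsetP Hsub).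
exact: le_lt_trans (Hmono x) Hfin.
Qed.

(* Temporarily closing the target makes the update harmless: only [tgt t]
   changes its g-value. *)
Lemma update_close_inv v Ip Ih K C O d t :
  astar_inv v (Config Ip Ih K C O d) -> t \in T -> src t \in K ->
  astar_inv v (Config (p_update c Ip t) (update Ih t) (tgt t |: K) (tgt t |: C) O d).
Proof.
case=> /= HR Hdom Hknown Hge Hcov Ht HsK.
have := HsK; rewrite Hdom; case Es: (Ip (src t)) => [[g p]|] // _.
split=> //=.
- exact: RIupd.
- move=> x; rewrite in_setU1; have [->|Hne] := eqVneq x (tgt t).
    by rewrite (p_update_tgt_defined Es).
  by rewrite (p_update_other Es Hne) Hdom.
- by move=> e /Hknown HeK; rewrite in_setU1 HeK orbT.
move=> x; rewrite !in_setU1 negb_or => HxK /andP[Hne HxC] Hfin.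
rewrite (negbTE Hne) /= in HxK.
have mU := h_le_update x HR Ht.
apply: covers_le mU (Hcov x HxK HxC (le_lt_trans mU Hfin)).
by rewrite /gval (p_update_other Es Hne).
Qed.

Definition expanding_inv (v : \bar R) (s : S) (cf : config R sig) : Prop :=
  [/\ astar_inv v cf, s \in cknown cf & v <= (gval (cIp cf) s)%:E + h s (cIh cf)].

Lemma expand_one_inv v s cf t : t \in T -> src t = s ->
  expanding_inv v s cf -> expanding_inv v s (expand_one c h cf t).
Proof.
case: cf => Ip Ih K C O d Ht Hsrc [Hinv /= HsK Hvs].
case: (Hinv) => /= HR Hdom _ _ Hcov.
have := HsK; rewrite Hdom; case Egs: (Ip s) => [[g p]|] // _.
have Es : Ip (src t) = Some (g, p) by rewrite Hsrc.
set s' := tgt t; set Ip' := p_update c Ip t; set Ih' := update Ih t.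
have Hclosed : astar_inv v (Config Ip' Ih' (s' |: K) (s' |: C) O d).
  by apply: update_close_inv; rewrite ?Hsrc.
have mU x : h x Ih <= h x Ih' by apply: h_le_update HR Ht.
have HsK' : s \in s' |: K by rewrite in_setU1 HsK orbT.
have Hvs' : v <= (gval Ip' s)%:E + h s Ih'.
  apply: le_trans Hvs (leeD _ (mU s)); rewrite lee_fin -Hsrc.
  exact: gval_p_update_src Es (c_ge0 _).
have Hvnew : v <= (g + c (lbl t))%:E + h s' Ih'.
  apply: le_trans Hvs _; rewrite /gval Egs EFinD -addeA; apply: leeD2l.
  apply: le_trans (mU s) _; rewrite -Hsrc.
  by apply: h_cons => //; exists (s' |: K); apply: RIupd; rewrite ?Hsrc.
have push C' : s' |: C' = s' |: C -> gval Ip' s' = (g + c (lbl t))%R ->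
    astar_inv v (Config Ip' Ih' (s' |: K) C' ((s', gval Ip' s', h s' Ih') :: O) d).
  move=> EC Eg; apply: (inv_unclose (s := s')) => [|_ _]; last exact: covers_head.
  by rewrite EC; apply: inv_push Hclosed _ _; rewrite ?setU11 // /ekey /= Eg.
rewrite /expand_one /=; case: ifP => [/eqP Hinf|Hfin].
  by split=> //; apply: inv_unclose Hclosed _; rewrite Hinf ltxx.
case: ifP => [Hnew|/negbFE Hs'K].
  split=> //; apply: push => //; apply: (gval_p_update_undef Es).
  by apply/eqP; move: Hnew; rewrite Hdom negbK.
case: ifP => [Hlt|Hnlt].
  split=> //; apply: push.
    by apply/setP => x; rewrite !inE; case: eqP.
  by case: (p_update_tgt (c := c) Es) => // E; move: Hlt; rewrite /gval E ltxx.
split=> //; apply: inv_unclose Hclosed _ => Hs'C Hs'fin.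
have Eg : gval Ip' s' = gval Ip s'.
  apply/eqP; rewrite eq_le (gval_p_update_tgt_le Es) -?Hdom //=.
  by rewrite leNgt Hnlt.
exact: covers_le Eg (mU s') (Hcov s' Hs'K Hs'C (le_lt_trans (mU s') Hs'fin)).
Qed.

Lemma foldl_expand_inv v s ts cf :
  {in ts, forall t, (t \in T) && (src t == s)} ->
  expanding_inv v s cf -> expanding_inv v s (foldl (expand_one c h) cf ts).
Proof.
elim: ts cf => [|t ts IH] cf //= Hts Hcf.
have /andP[Ht /eqP Hs] := Hts t (mem_head _ _).
by apply: IH (expand_one_inv Ht Hs Hcf) => t' Ht'; apply: Hts; rewrite in_cons Ht' orbT.
Qed.

(* The popped state is refined and closed; it keeps the popped value as the
   frontier bound [expanding_inv] that its successors are compared with. *)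
Lemma pop_refine_inv b cf e :
  astar_inv b cf -> e \in copen cf -> all (fun e' => ekey e <= ekey e') (copen cf) ->
  e.1.1 \notin cclosed cf ->
  expanding_inv (ekey e) e.1.1 (Config (cIp cf) (refine (cIh cf) e.1.1) (cknown cf)
    (e.1.1 |: cclosed cf) (rem e (copen cf)) false).
Proof.
move=> Hinv He Hmin HsC; have [HR _ Hknown _ _] := Hinv.
have HsK : e.1.1 \in cknown cf by apply: Hknown.
have mR x : h x (cIh cf) <= h x (refine (cIh cf) e.1.1) by apply: h_le_refine HR.
split=> //=; first exact: pop_inv Hinv He Hmin (RIref HR HsK) mR (setU11 _ _) (subsetUr _ _).
by apply: le_trans (popped_key_le Hinv He Hmin HsK HsC) _; apply: leeD2l.
Qed.

Lemma step_inv reeval b cf v cf' :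
  astar_step T c SG h reeval cf v cf' -> astar_inv b cf -> b <= v /\ astar_inv v cf'.
Proof.
case=> [cf0 e|cf0 e|cf0 e|cf0 e ts] _ He Hmin HsC;
  [move=> Hinv | move=> s Ip Ih _ _ Hinv | move=> s Ip Ih _ _ Hinv
  | move=> s Ip Ih _ _ _ Hts Hinv];
  have [HR _ _ Hge _] := Hinv; split; try exact: Hge.
- by apply: pop_inv Hinv He Hmin HR _ HsC (subxx _) => x.
- have [Hpop HsK Hvs] := pop_refine_inv Hinv He Hmin HsC.
  case: ifP => [Hfin|Hinf]; last by apply: inv_unclose Hpop _ => _; rewrite Hinf.
  apply: inv_unclose (fun _ _ => covers_head _ _ _ _).
  by apply: (inv_push Hpop).
- by case: (pop_refine_inv Hinv He Hmin HsC).
- suff [] : expanding_inv (ekey e) s (foldl (expand_one c h)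
      (Config Ip Ih (cknown cf0) (s |: cclosed cf0) (rem e (copen cf0)) false) ts) by [].
  apply: foldl_expand_inv (pop_refine_inv Hinv He Hmin HsC).
  by move=> t; rewrite Hts.
Qed.

Lemma run_inv reeval vs cf : astar_run T c sI SG h reeval vs cf ->
  astar_inv (last -oo vs) cf /\ path (fun x y : \bar R => x <= y) -oo vs.
Proof.
elim=> [|vs0 cf0 v cf1 _ [Hinv Hpath] Hstep]; first by split=> //; exact: init_inv.
have [Hle Hinv'] := step_inv Hstep Hinv.
by rewrite last_rcons rcons_path Hpath Hle.
Qed.

End DynamicAStar.

Theorem theorem6 (R : realDomainType) (S L : finType)
    (T : {set trans S L}) (c : L -> R) (sI : S) (SG : {set S})
    (sig : info_source S L) (h : S -> info sig -> \bar R) (reeval : bool) :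
  (forall l, 0 <= c l) ->
  dyn_heuristic h ->
  dyn_admissible T c sI SG h ->
  dyn_monotonic T sI h ->
  dyn_consistent T c sI h ->
  forall (vs : seq (\bar R)) (cf : config R sig),
    astar_run T c sI SG h reeval vs cf ->
    sorted (fun x y : \bar R => (x <= y)%E) vs.
Proof.
move=> c_ge0 _ _ h_mono h_cons vs cf Hrun.
exact: path_sorted (run_inv c_ge0 h_mono h_cons Hrun).2.
Qed.
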